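(* For every $0<p<1$ we have $\frac12<\pi(p,p)<1$.
   Context: Let $\beta_1,\beta_2,\ldots$ be independent Bernoulli random variables with success probability $p$. A stake sequence is a sequence $\gamma=(c_1,c_2,\ldots)$ of non-negative reals with $c_1\ge c_2\ge\cdots$ and $\sum_i c_i=1$; write $S_\gamma=\sum_i c_i\beta_i$. For $0\le p\le t\le 1$ define $\pi(p,t)=\sup\{\mathbf P(S_\gamma\ge t)\mid \gamma \text{ a stake sequence}\}$. *)

From HB Require Import structures.
From mathcomp Require Import all_boot all_order all_algebra.
From mathcomp Require Import all_classical all_reals all_analysis.
Set Implicit Arguments. Unset Strict Implicit. Unset Printing Implicit Defensive.
Import Order.TTheory GRing.Theory Num.Theory numFieldNormedType.Exports.
Local Open Scope classical_set_scope.
Local Open Scope ring_scope.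

Section Defs.
Context (d : measure_display) (T : measurableType d) (R : realType)
        (P : probability T R).

Definition mutually_independent (X : nat -> T -> R) : Prop :=
  forall (J : seq nat) (B : nat -> set R),
    uniq J -> (forall j, measurable (B j)) ->
    P (\big[setI/setT]_(j <- J) (X j @^-1` B j)) =
    (\prod_(j <- J) P (X j @^-1` B j))%E.

Definition bernoulli_rv (p : R) (X : T -> R) : Prop :=
  measurable_fun setT X /\ (forall w, X w = 0 \/ X w = 1) /\
  P (X @^-1` [set 1]) = p%:E.

Definition stake_seq (c : nat -> R) : Prop :=
  (forall i, 0 <= c i) /\ (forall i, c i.+1 <= c i) /\
  (series c n @[n --> \oo] --> (1:R)).

Definition S_gamma (beta : nat -> T -> R) (c : nat -> R) (w : T) : R :=
  limn (fun n => \sum_(i < n) c i * beta i w).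

Definition pi_fun (beta : nat -> T -> R) (t : R) : \bar R :=
  ereal_sup [set P [set w | t <= S_gamma beta c w] | c in stake_seq].

End Defs.

From HB Require Import structures.
From mathcomp Require Import all_boot all_order all_algebra.
From mathcomp Require Import all_classical all_reals all_analysis.
From mathcomp Require Import ring lra.
Import Order.TTheory GRing.Theory Num.Theory numFieldNormedType.Exports.
Local Open Scope classical_set_scope.
Local Open Scope ring_scope.
Set Implicit Arguments. Unset Strict Implicit. Unset Printing Implicit Defensive.

(* Lower bound: for m = floor(1/p), equal stakes 1/m on the first m coins give S >= p as soon
   as one of these coins succeeds, which has probability 1 - (1-p)^m > 1/2 because
   (1-p)(1 + 1/m) < 1 and (1 + 1/m)^m >= 2.
   Upper bound: given any stake sequence, choose n so that the tail mass
   r = 1 - (c_0 + ... + c_(n-1)) is small compared with c_0. Then S >= p forces the centred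
   partial sum Y = sum_(i<n) c_i (beta_i - p) to be at least -(1-p) r. By independence, the law of
   Y is computed over n independent coins, where E Y = 0, E Y^2 = p(1-p) sum c_i^2 >= p(1-p) c_0^2
   and E Y^4 <= K (E Y^2)^2 with K = 3 + 1/(p(1-p)). Integrating a polynomial minorant of the
   indicator of [Y < -t] then gives P(Y < -(1-p) r) >= 1/(12 K^2), uniformly in the stakes. *)

Section CoinExpectation.
Variables (R : comPzRingType) (p : R).

(* [Ebern n f] is the expectation of [f x] when [x 0], ..., [x n.-1] are independent
   Bernoulli(p) coins and [x i = 0] for [i >= n]. *)
Fixpoint Ebern (n : nat) (f : (nat -> R) -> R) : R :=
  if n is m.+1 then p * Ebern m (fun x => f [eta x with m |-> 1])
                    + (1 - p) * Ebern m (fun x => f [eta x with m |-> 0])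
  else f (fun=> 0).

Lemma eq_Ebern n f g : (forall x, f x = g x) -> Ebern n f = Ebern n g.
Proof.
elim: n f g => [|n IHn] f g efg /=; first exact: efg.
by congr (_ * _ + _ * _); apply: IHn => x; apply: efg.
Qed.

Lemma EbernD n f g : Ebern n (fun x => f x + g x) = Ebern n f + Ebern n g.
Proof. by elim: n f g => [|n IHn] f g //=; rewrite !IHn; ring. Qed.

Lemma EbernZ n a f : Ebern n (fun x => a * f x) = a * Ebern n f.
Proof. by elim: n f => [|n IHn] f //=; rewrite !IHn; ring. Qed.

Lemma Ebern_cst n a : Ebern n (fun=> a) = a.
Proof. by elim: n => [|n IHn] //=; rewrite !IHn; ring. Qed.

Lemma Ebern1B n f : Ebern n (fun x => 1 - f x) = 1 - Ebern n f.
Proof.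
rewrite (eq_Ebern _ (g := fun x => 1 + -1 * f x)) => [|x]; last by ring.
by rewrite EbernD EbernZ Ebern_cst mulN1r.
Qed.

Lemma Ebern_prod1B n : Ebern n (fun x => \prod_(i < n) (1 - x i)) = (1 - p) ^+ n.
Proof.
elim: n => [|n IHn] /=; first by rewrite big_ord0.
have lift_prod (b : R) (x : nat -> R) : \prod_(i < n.+1) (1 - [eta x with n |-> b] i) =
    (1 - b) * \prod_(i < n) (1 - x i).
  rewrite big_ord_recr /= eqxx mulrC; congr (_ * _).
  by apply: eq_bigr => i _; rewrite ifN // neq_ltn ltn_ord.
rewrite !(eq_Ebern _ (lift_prod _)) !EbernZ IHn exprS; ring.
Qed.

Definition csum (c : nat -> R) (n : nat) (x : nat -> R) : R :=
  \sum_(i < n) c i * (x i - p).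

Lemma Ebern_csumS c n (F : R -> R) :
  Ebern n.+1 (fun x => F (csum c n.+1 x)) =
  p * Ebern n (fun x => F (csum c n x + c n * (1 - p)))
  + (1 - p) * Ebern n (fun x => F (csum c n x - c n * p)).
Proof.
have csumS (b : R) (x : nat -> R) : csum c n.+1 [eta x with n |-> b] = csum c n x + c n * (b - p).
  rewrite /csum big_ord_recr /= eqxx; congr (_ + _).
  by apply: eq_bigr => i _; rewrite ifN // neq_ltn ltn_ord.
rewrite /= !(eq_Ebern _ (fun x => congr1 F (csumS _ x))) sub0r.
by rewrite (eq_Ebern _ (fun x => congr1 (fun y => F (_ + y)) (mulrN _ _))).
Qed.

Definition bvar := p * (1 - p).

Lemma Ebern_csum c n : Ebern n (csum c n) = 0.
Proof.
elim: n => [|n IHn]; first by rewrite /= /csum big_ord0.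
rewrite (Ebern_csumS c n id) !EbernD !Ebern_cst IHn; ring.
Qed.

Lemma Ebern_csum2 c n :
  Ebern n (fun x => csum c n x ^+ 2) = bvar * \sum_(i < n) c i ^+ 2.
Proof.
elim: n => [|n IHn]; first by rewrite /= /csum !big_ord0 expr0n mulr0.
rewrite (Ebern_csumS c n (fun y => y ^+ 2)) big_ord_recr /=.
have sq (a : R) (x : nat -> R) :
  (csum c n x + a) ^+ 2 = csum c n x ^+ 2 + (2 * a) * csum c n x + a ^+ 2 by ring.
rewrite !(eq_Ebern _ (sq _)) !EbernD !EbernZ !Ebern_cst IHn Ebern_csum /bvar; ring.
Qed.

Lemma Ebern_csum4 c n :
  Ebern n (fun x => csum c n x ^+ 4) =
  3 * (bvar * \sum_(i < n) c i ^+ 2) ^+ 2 + bvar * (1 - 6 * bvar) * \sum_(i < n) c i ^+ 4.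
Proof.
elim: n => [|n IHn]; first by rewrite /= /csum !big_ord0; ring.
rewrite (Ebern_csumS c n (fun y => y ^+ 4)) !big_ord_recr /=.
have quart (a : R) (x : nat -> R) : (csum c n x + a) ^+ 4 =
    csum c n x ^+ 4 + (4 * a) * csum c n x ^+ 3 + (6 * a ^+ 2) * csum c n x ^+ 2
    + (4 * a ^+ 3) * csum c n x + a ^+ 4 by ring.
rewrite !(eq_Ebern _ (quart _)) !EbernD !EbernZ !Ebern_cst IHn Ebern_csum Ebern_csum2 /bvar; ring.
Qed.

End CoinExpectation.

Lemma sum_sqr_le_sqr_sum (R : realDomainType) n (a : nat -> R) :
  (forall i, 0 <= a i) -> \sum_(i < n) a i ^+ 2 <= (\sum_(i < n) a i) ^+ 2.
Proof.
move=> a_ge0; elim: n => [|n IHn]; first by rewrite !big_ord0 expr0n.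
rewrite !big_ord_recr /=.
have S_ge0 : 0 <= \sum_(i < n) a i by rewrite sumr_ge0.
have := a_ge0 n; nra.
Qed.

Lemma quartic_le_cubic (R : realDomainType) (a u : R) : 0 <= a -> 0 <= u ->
  4 * a ^+ 2 * u ^+ 2 - u ^+ 4 <= 4 * a ^+ 3 * u.
Proof.
move=> a_ge0 u_ge0; rewrite -subr_ge0.
have -> : 4 * a ^+ 3 * u - (4 * a ^+ 2 * u ^+ 2 - u ^+ 4) =
    u * (u * (u - 2 * a) ^+ 2 + 4 * a * (u - a) ^+ 2) by ring.
by apply: mulr_ge0 => //; apply: addr_ge0; apply: mulr_ge0; rewrite ?sqr_ge0 ?mulr_ge0.
Qed.

(* With [w = K s], the expectation of the left-hand side only involves the first, second and
   fourth moments of [y]. *)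
Lemma anticoncentration_pointwise (R : realDomainType) (w t y : R) : 0 <= w -> 0 <= t ->
  7 * w ^+ 2 * y ^+ 2 - 2 * y ^+ 4 - 8 * w ^+ 3 * y - 16 * w ^+ 3 * t
  <= 64 * w ^+ 4 * (y < - t)%R%:R.
Proof.
move=> w_ge0 t_ge0.
have := quartic_le_cubic w_ge0 (normr_ge0 y).
rewrite -[`|y| ^+ 4]/(`|y| ^+ (2 * 2)) exprM !real_normK ?num_real // => quartic.
have w3_ge0 : 0 <= w ^+ 3 by rewrite exprn_ge0.
have : 0 <= (w * y + 8 * w ^+ 2) ^+ 2 by rewrite sqr_ge0.
have w3t_ge0 : 0 <= w ^+ 3 * t by rewrite mulr_ge0.
case: (ltrP y (- t)) => [y_lt|y_ge]; rewrite ?mulr1 ?mulr0.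
  case: (ler0P y) => y0 in quartic *; nra.
have : 0 <= w ^+ 3 * (y + t) by rewrite mulr_ge0 // -lerBlDr sub0r.
case: (ler0P y) => y0 in quartic *; nra.
Qed.

Section CoinExpectationOrder.
Variables (R : realFieldType) (p : R).
Hypothesis p01 : 0 <= p <= 1.

Definition binary (x : nat -> R) := forall i, x i = 0 \/ x i = 1.

Lemma ler_Ebern n f g : (forall x, binary x -> f x <= g x) ->
  Ebern p n f <= Ebern p n g.
Proof.
have /andP[p_ge0 p_le1] := p01.
have binary_with x m b : binary x -> b = 0 \/ b = 1 -> binary [eta x with m |-> b].
  by move=> x01 b01 i /=; case: (i == m).
elim: n f g => [|n IHn] f g fg /=; first by apply: fg => i; left.
by apply: lerD; apply: ler_wpM2l; rewrite ?subr_ge0 //; apply: IHn => x x01;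
  apply: fg; apply: binary_with => //; [right | left].
Qed.

Lemma Ebern_anticoncentration n (Y : (nat -> R) -> R) (K s t : R) :
  3 <= K -> 0 < s -> 0 <= t -> 16 * K * t <= s ->
  Ebern p n Y = 0 -> Ebern p n (fun x => Y x ^+ 2) = s ^+ 2 ->
  Ebern p n (fun x => Y x ^+ 4) <= K * s ^+ 4 ->
  (12 * K ^+ 2)^-1 <= Ebern p n (fun x => (Y x < - t)%R%:R).
Proof.
move=> K_ge3 s_gt0 t_ge0 t_small EY EY2 EY4.
have K_gt0 : 0 < K by apply: lt_le_trans K_ge3.
have w_ge0 : 0 <= K * s by rewrite mulr_ge0 ?ltW.
have := ler_Ebern n (fun x _ => anticoncentration_pointwise (Y x) w_ge0 t_ge0).
rewrite EbernZ (eq_Ebern _ _ (g := fun x =>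
  (7 * (K * s) ^+ 2) * Y x ^+ 2 + (-2) * Y x ^+ 4 + (- 8 * (K * s) ^+ 3) * Y x
  + (- 16 * (K * s) ^+ 3 * t))) => [|x]; last by ring.
rewrite !EbernD !EbernZ Ebern_cst EY EY2 mulr0 addr0.
set q := Ebern p n (fun x => _%:R) => main.
set E4 := Ebern p n (fun x => Y x ^+ 4) in EY4 main.
have u_gt0 : 0 < K ^+ 2 * s ^+ 4 by rewrite mulr_gt0 ?exprn_gt0.
have t_term : 16 * (K * s) ^+ 3 * t <= K ^+ 2 * s ^+ 4.
  have : 0 <= K ^+ 2 * s ^+ 3 by rewrite ltW ?mulr_gt0 ?exprn_gt0.
  rewrite exprMn; nra.
have K_term : 6 * K * s ^+ 4 <= 2 * K ^+ 2 * s ^+ 4.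
  have : 0 <= K * s ^+ 4 by rewrite ltW ?mulr_gt0 ?exprn_gt0.
  nra.
rewrite -[leLHS]mulr1 ler_pdivrMl ?mulr_gt0 ?exprn_gt0 // -(ler_pM2l u_gt0).
rewrite !exprMn in main t_term.
rewrite [X in _ <= X](_ : _ = 3 / 16 * (64 * (K ^+ 4 * s ^+ 4) * q)); first lra.
by field.
Qed.

Definition kurt_bound := 3 + (bvar p)^-1.

Lemma bvar_ge0 : 0 <= bvar p.
Proof. by have /andP[p_ge0 p_le1] := p01; rewrite mulr_ge0 ?subr_ge0. Qed.

Lemma kurt_bound_ge3 : 3 <= kurt_bound.
Proof. by rewrite lerDl invr_ge0 bvar_ge0. Qed.

Lemma Ebern_csum4_le c n : Ebern p n (fun x => csum p c n x ^+ 4) <=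
  kurt_bound * Ebern p n (fun x => csum p c n x ^+ 2) ^+ 2.
Proof.
rewrite Ebern_csum4 Ebern_csum2 /kurt_bound.
set v := bvar p; set S2 := \sum_(i < n) c i ^+ 2; set S4 := \sum_(i < n) c i ^+ 4.
have v_ge0 : 0 <= v := bvar_ge0.
have S4_le : S4 <= S2 ^+ 2.
  rewrite /S4 (eq_bigr (fun i : 'I_n => (c i ^+ 2) ^+ 2)) => [|i _]; last by rewrite -exprM.
  by have := @sum_sqr_le_sqr_sum _ n (fun i => c i ^+ 2); apply => i; exact: sqr_ge0.
have S4_ge0 : 0 <= S4 by rewrite sumr_ge0 // => i _; rewrite -[4%N]/(2 * 2)%N exprM sqr_ge0.
have -> : (3 + v^-1) * (v * S2) ^+ 2 = 3 * (v * S2) ^+ 2 + v * S2 ^+ 2.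
  have [->|v_neq0] := eqVneq v 0; first by rewrite invr0; ring.
  by field.
rewrite lerD2l; apply: (@le_trans _ _ (v * S4)); last exact: ler_wpM2l.
have : 0 <= v ^+ 2 * S4 by rewrite mulr_ge0 ?sqr_ge0.
nra.
Qed.

End CoinExpectationOrder.

Section IndependentCoins.
Context (d : measure_display) (T : measurableType d) (R : realType)
  (P : probability T R) (p : R) (beta : nat -> T -> R).
Hypothesis beta_bern : forall i, bernoulli_rv P p (beta i).
Hypothesis beta_indep : mutually_independent P beta.

Lemma measurable_beta_preimage i C : measurable C -> measurable (beta i @^-1` C).
Proof. by move=> mC; rewrite -[X in measurable X]setTI; apply: (beta_bern i).1. Qed.

Lemma P_beta1 i : fine (P (beta i @^-1` [set 1])) = p.
Proof. by rewrite (beta_bern i).2.2. Qed.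

Lemma P_beta0 i : fine (P (beta i @^-1` [set 0])) = 1 - p.
Proof.
have -> : beta i @^-1` [set 0] = ~` (beta i @^-1` [set 1]).
  apply/seteqP; split => w /=; first by move=> -> /esym/eqP; rewrite oner_eq0.
  by case: ((beta_bern i).2.1 w).
rewrite probability_setC ?(beta_bern i).2.2 //.
exact: measurable_beta_preimage.
Qed.

Definition coin_rect (J : seq nat) (C : nat -> set R) : set T :=
  \big[setI/setT]_(j <- J) (beta j @^-1` C j).

Lemma measurable_coin_rect J C : (forall j, measurable (C j)) -> measurable (coin_rect J C).
Proof. by move=> mC; apply: bigsetI_measurable => j _; apply: measurable_beta_preimage. Qed.

Lemma P_coin_rect J C : uniq J -> (forall j, measurable (C j)) ->
  P (coin_rect J C) = (\prod_(j <- J) fine (P (beta j @^-1` C j)))%:E.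
Proof.
move=> J_uniq mC; rewrite /coin_rect beta_indep // -prodEFin.
by apply: eq_bigr => j _; rewrite fineK // fin_num_measure //; exact: measurable_beta_preimage.
Qed.

Definition trunc_coins (n : nat) (w : T) : nat -> R :=
  fun i => if (i < n)%N then beta i w else 0.

Lemma trunc_coins_preimageS n B : trunc_coins n.+1 @^-1` B =
  (trunc_coins n @^-1` [set x | B [eta x with n |-> 1]] `&` beta n @^-1` [set 1]) `|`
  (trunc_coins n @^-1` [set x | B [eta x with n |-> 0]] `&` beta n @^-1` [set 0]).
Proof.
have coinsS w : trunc_coins n.+1 w = [eta trunc_coins n w with n |-> beta n w].
  apply: funext => i /=; rewrite /trunc_coins ltnS leq_eqVlt.
  by case: eqP => [->|]; rewrite ?ltnn.
apply/seteqP; split => w /=; rewrite coinsS.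
  by case: ((beta_bern n).2.1 w) => ->; [right | left].
by case=> -[Bw ->].
Qed.

Lemma measurable_trunc_coins_preimage n B : measurable (trunc_coins n @^-1` B).
Proof.
elim: n B => [|n IHn] B.
  by rewrite (preimage_cst (fun=> 0) B); case: ifP.
rewrite trunc_coins_preimageS.
by apply: measurableU; apply: measurableI => //; apply: measurable_beta_preimage.
Qed.

(* The rectangle on coordinates [>= n] strengthens the induction: peeling off coin [n.-1]
   moves it into the rectangle. *)
Lemma P_trunc_coins_rect n B J C : uniq J -> {in J, forall j, n <= j}%N ->
  (forall j, measurable (C j)) ->
  P (trunc_coins n @^-1` B `&` coin_rect J C) =
  (Ebern p n (fun x => (x \in B)%:R) * \prod_(j <- J) fine (P (beta j @^-1` C j)))%:E.
Proof.
elim: n B J C => [|n IHn] B J C J_uniq J_ge mC.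
  rewrite (preimage_cst (fun=> 0) B) /=; case: ifP => _.
    by rewrite setTI P_coin_rect // mul1r.
  by rewrite set0I measure0 mul0r.
have nJ : n \notin J by apply/negP => /J_ge; rewrite ltnn.
set Pi := \prod_(j <- J) _.
have rect_cons (b : R) : beta n @^-1` [set b] `&` coin_rect J C =
    coin_rect (n :: J) [eta C with n |-> [set b]].
  rewrite /coin_rect big_cons /= eqxx; congr (_ `&` _).
  by apply: eq_big_seq => j jJ /=; rewrite ifN //; apply: contraNneq nJ => <-.
have step (b : R) : P (trunc_coins n @^-1` [set x | B [eta x with n |-> b]] `&`
      (beta n @^-1` [set b] `&` coin_rect J C)) =
    (Ebern p n (fun x => (([eta x with n |-> b] : nat -> R) \in B)%:R) *
     fine (P (beta n @^-1` [set b])) * Pi)%:E.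
  rewrite rect_cons IHn //=; last first.
  - by move=> j; case: (j == n) => //; apply: measurable_set1.
  - by move=> j; rewrite inE => /predU1P[->|/J_ge/ltnW].
  - by rewrite nJ.
  rewrite big_cons /= eqxx -mulrA; congr (_ * (_ * _))%:E.
  by apply: eq_big_seq => j jJ /=; rewrite ifN //; apply: contraNneq nJ => <-.
have measurable_part (b : R) : measurable (trunc_coins n @^-1` [set x | B [eta x with n |-> b]] `&`
    (beta n @^-1` [set b] `&` coin_rect J C)).
  apply: measurableI; first exact: measurable_trunc_coins_preimage.
  apply: measurableI; first exact: measurable_beta_preimage.
  exact: measurable_coin_rect.
rewrite trunc_coins_preimageS setIUl -!setIA measureU //; last first.
  apply/seteqP; split => // w [[_ [/= w1 _]] [_ [/= w0 _]]].
  by move: w1; rewrite w0 => /eqP; rewrite eq_sym oner_eq0.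
(* [rewrite (step 1)] fails: [measureU] exposes [P] through another structure projection. *)
apply: eq_trans (congr2 (fun a b => (a + b)%E) (step 1) (step 0)) _.
by rewrite P_beta1 P_beta0 -EFinD; congr EFin; rewrite [RHS]/=; ring.
Qed.

Lemma P_trunc_coins_preimage n B :
  P (trunc_coins n @^-1` B) = (Ebern p n (fun x => (x \in B)%:R))%:E.
Proof.
have := @P_trunc_coins_rect n B [::] (fun=> setT) erefl.
by rewrite /coin_rect !big_nil setIT mulr1; apply.
Qed.

End IndependentCoins.

Section StakeSequence.
Variables (R : realType) (c : nat -> R).
Hypothesis c_stake : stake_seq c.

Lemma stake_ge0 i : 0 <= c i.
Proof. by case: c_stake. Qed.

Lemma stake_partial_le1 n : \sum_(i < n) c i <= 1.
Proof.
have [_ [_ c_cvg]] := c_stake.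
have c_nd : nondecreasing_seq (series c).
  by apply: (@nondecreasing_series _ _ xpredT 0) => k _ _; exact: stake_ge0.
have := nondecreasing_cvgn_le c_nd (cvgP _ c_cvg) n.
by rewrite (cvg_lim _ c_cvg) // /series /= big_mkord.
Qed.

Lemma stake_head_gt0 : 0 < c 0.
Proof.
have [c_ge0 [c_noninc c_cvg]] := c_stake.
rewrite lt_def c_ge0 andbT; apply/eqP => c00.
have c0 i : c i = 0.
  apply/eqP; rewrite eq_le c_ge0 andbT -c00.
  by elim: i => // i IHi; apply: le_trans (c_noninc i) IHi.
move/cvgrPdist_lt: c_cvg => /(_ _ ltr01) [N _ /(_ N (leqnn N))] /=.
by rewrite /series /= big1 ?subr0 ?normr1 ?ltxx.
Qed.

Lemma stake_tail_lt e : 0 < e -> exists n, (0 < n)%N /\ 1 - \sum_(i < n) c i < e.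
Proof.
have [_ [_ /cvgrPdist_lt c_cvg]] := c_stake.
move=> /c_cvg [N _ /(_ N.+1 (leqnSn N))] /= tail_lt.
exists N.+1; split => //; apply: le_lt_trans tail_lt.
by rewrite /series /= big_mkord ler_norm.
Qed.

Section BoundedWeights.
Variable x : nat -> R.
Hypothesis x01 : forall i, 0 <= x i <= 1.

Let cx_ge0 i : 0 <= c i * x i.
Proof. by rewrite mulr_ge0 ?stake_ge0 //; case/andP: (x01 i). Qed.

Let cx_le i : c i * x i <= c i.
Proof. by rewrite ler_piMr ?stake_ge0 //; case/andP: (x01 i). Qed.

Let sum_split (f : nat -> R) n k : (n <= k)%N ->
  \sum_(i < k) f i = \sum_(i < n) f i + \sum_(n <= i < k) f i.
Proof. by move=> nk; rewrite -!(big_mkord xpredT) (big_cat_nat (leq0n n) nk). Qed.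

Lemma cvgn_stake_sum : cvgn (fun n => \sum_(i < n) c i * x i).
Proof.
apply: nondecreasing_is_cvgn.
  by move=> m n mn; rewrite (sum_split (fun i => c i * x i) mn) lerDl sumr_ge0.
exists 1 => _ [n _ <-]; apply: le_trans (stake_partial_le1 n).
exact: ler_sum.
Qed.

Lemma lim_stake_sum_le n :
  limn (fun k => \sum_(i < k) c i * x i) <= \sum_(i < n) c i * x i + (1 - \sum_(i < n) c i).
Proof.
apply: limr_le; first exact: cvgn_stake_sum.
exists n => // k /= nk; rewrite (sum_split (fun i => c i * x i) nk) lerD2l.
apply: (@le_trans _ _ (\sum_(n <= i < k) c i)); first exact: ler_sum.
by have := stake_partial_le1 k; rewrite (sum_split c nk) lerBrDl.
Qed.

End BoundedWeights.
End StakeSequence.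

Lemma sum_ord_vanishing (R : nmodType) (f : nat -> R) m n : (m <= n)%N ->
  (forall i, (m <= i)%N -> f i = 0) -> \sum_(i < n) f i = \sum_(i < m) f i.
Proof.
move=> mn f0; rewrite (big_ord_widen _ _ mn) [RHS]big_mkcond /=.
by apply: eq_bigr => i _; case: ltnP => // /f0.
Qed.

Definition uniform_stake {R : fieldType} (m : nat) : nat -> R :=
  fun i => if (i < m)%N then m%:R^-1 else 0.

Lemma uniform_stake_seq (R : realType) m : (0 < m)%N -> stake_seq (@uniform_stake R m).
Proof.
move=> m_gt0; have inv_ge0 : 0 <= m%:R^-1 :> R by rewrite invr_ge0.
split; first by move=> i; rewrite /uniform_stake; case: ifP.
split.
  move=> i; rewrite /uniform_stake; case: (ltnP i.+1 m) => [/ltnW ->|_] //.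
  by case: ifP.
apply: cvg_near_cst; exists m => // n /= mn.
rewrite /series /= big_mkord (sum_ord_vanishing mn); last first.
  by move=> i; rewrite /uniform_stake ltnNge => ->.
rewrite (eq_bigr (fun=> m%:R^-1)) => [|i _]; last by rewrite /uniform_stake ltn_ord.
by rewrite sumr_const card_ord -[_ *+ m]mulr_natr mulVf // pnatr_eq0 -lt0n.
Qed.

Lemma bernoulli_ineq (R : realDomainType) (x : R) n : 0 <= x -> 1 + n%:R * x <= (1 + x) ^+ n.
Proof.
move=> x_ge0; elim: n => [|n IHn]; first by rewrite mul0r addr0.
rewrite exprS -natr1.
have : 0 <= n%:R * x * x by rewrite !mulr_ge0.
have : 0 <= 1 + x by rewrite addr_ge0.
nra.
Qed.

Lemma expr_subr_lt_half (R : realFieldType) (p : R) m : (0 < m)%N -> p <= 1 ->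
  1 < p * m.+1%:R -> (1 - p) ^+ m < 2^-1.
Proof.
move=> m_gt0 p_le1 pm_gt1.
have m_pos : 0 < m%:R :> R by rewrite ltr0n.
have q_ge0 : 0 <= 1 - p by rewrite subr_ge0.
have two_le : 2 <= (1 + m%:R^-1) ^+ m :> R.
  have inv_ge0 : 0 <= m%:R^-1 :> R by rewrite invr_ge0 ltW.
  by have := bernoulli_ineq m inv_ge0; rewrite mulfV ?gt_eqF //; lra.
have base_lt1 : (1 - p) * (1 + m%:R^-1) < 1.
  have -> : (1 - p) * (1 + m%:R^-1) = (1 - p) * (m%:R + 1) / m%:R.
    by field; rewrite gt_eqF.
  by rewrite ltr_pdivrMr // mul1r; rewrite -natr1 in pm_gt1; lra.
have base_ge0 : 0 <= (1 - p) * (1 + m%:R^-1).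
  by rewrite mulr_ge0 // addr_ge0 // invr_ge0 ltW.
have : ((1 - p) * (1 + m%:R^-1)) ^+ m < 1 by rewrite exprn_ilt1 // lt0n_neq0.
rewrite exprMn => prod_lt1.
have : (1 - p) ^+ m * 2 <= (1 - p) ^+ m * (1 + m%:R^-1) ^+ m.
  by rewrite ler_wpM2l ?exprn_ge0.
lra.
Qed.

Section StakeProbabilities.
Context (d : measure_display) (T : measurableType d) (R : realType)
  (P : probability T R) (p : R) (beta : nat -> T -> R).
Hypothesis beta_bern : forall i, bernoulli_rv P p (beta i).
Hypothesis beta_indep : mutually_independent P beta.
Hypothesis p01 : 0 < p < 1.

Let p01w : 0 <= p <= 1.
Proof. by case/andP: p01 => *; rewrite !ltW. Qed.

Let beta01 i w : 0 <= beta i w <= 1.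
Proof. by case: ((beta_bern i).2.1 w) => ->; rewrite lexx ler01. Qed.

Lemma measurable_S_gamma_ge c t : stake_seq c ->
  measurable [set w | t <= S_gamma beta c w].
Proof.
move=> c_stake.
have mS : measurable_fun setT (S_gamma beta c).
  apply: (measurable_realfun.measurable_fun_cvg
    (h := fun n w => \sum_(i < n) c i * beta i w)) => [n|w _].
    apply: measurable_sum => i.
    by apply: measurable_realfun.measurable_funM; [exact: measurable_cst | exact: (beta_bern i).1].
  exact: (@cvgn_stake_sum _ _ c_stake (beta^~ w) (beta01^~ w)).
have := mS measurableT _ (measurable_itv `[t, +oo[); rewrite setTI.
by congr measurable; apply/seteqP; split => w /=; rewrite in_itv /= andbT.
Qed.

Lemma P_uniform_stake_ge m : (0 < m)%N -> p <= m%:R^-1 ->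
  ((1 - (1 - p) ^+ m)%:E <= P [set w | (p <= S_gamma beta (uniform_stake m) w)%R])%E.
Proof.
move=> m_gt0 pm.
have S_uniform w : S_gamma beta (uniform_stake m) w = m%:R^-1 * \sum_(i < m) beta i w.
  rewrite /S_gamma (lim_near_cst _ (l := m%:R^-1 * \sum_(i < m) beta i w)) //.
  exists m => // n /= mn.
  rewrite (sum_ord_vanishing (f := fun i => uniform_stake m i * beta i w) mn) => [|i].
    by rewrite mulr_sumr; apply: eq_bigr => i _; rewrite /uniform_stake ltn_ord.
  by rewrite /uniform_stake ltnNge => ->; rewrite mul0r.
set B := [set x : nat -> R | p <= m%:R^-1 * \sum_(i < m) x i].
have -> : [set w | p <= S_gamma beta (uniform_stake m) w] = trunc_coins beta m @^-1` B.
  have sum_trunc w : \sum_(i < m) trunc_coins beta m w i = \sum_(i < m) beta i w.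
    by apply: eq_bigr => i _; rewrite /trunc_coins ltn_ord.
  by apply/seteqP; split => w; rewrite /= S_uniform /B /= sum_trunc.
rewrite (P_trunc_coins_preimage beta_bern beta_indep) lee_fin -(Ebern_prod1B p m) -Ebern1B.
apply: ler_Ebern => // x x01.
have factor01 i : 0 <= 1 - x i <= 1 by case: (x01 i) => ->; rewrite ?subr0 ?subrr lexx ler01.
case: (pselect (B x)) => Bx.
  rewrite mem_set // lerBlDr lerDl; apply: prodr_ge0 => i _.
  by case/andP: (factor01 i).
rewrite memNset // big1 ?subrr // => i _.
case: (x01 i) => [->|xi1]; first by rewrite subr0.
exfalso; apply: Bx; apply: (le_trans pm); rewrite /B /= ler_peMr ?invr_ge0 //.
rewrite (bigD1 i) //= xi1 lerDl sumr_ge0 // => j _.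
by case: (x01 j) => ->.
Qed.

Lemma lt_half_pi_fun : ((2^-1)%:E < pi_fun P beta p)%E.
Proof.
have /andP[p_gt0 p_lt1] := p01.
set m := Num.truncn p^-1.
have p_inv_ge1 : 1 <= p^-1 by rewrite invf_ge1 // ltW.
have m_gt0 : (0 < m)%N by rewrite truncn_gt0.
have pm : p <= m%:R^-1.
  by rewrite -[p]invrK lef_pV2 ?posrE ?invr_gt0 ?ltr0n ?truncn_le ?invr_ge0 ?ltW.
have pm1 : 1 < p * m.+1%:R by rewrite -ltr_pdivrMl // mulr1 truncnS_gt.
apply: (@lt_le_trans _ _ (1 - (1 - p) ^+ m)%:E).
  by rewrite lte_fin; have := expr_subr_lt_half m_gt0 (ltW p_lt1) pm1; lra.
apply: le_trans (P_uniform_stake_ge m_gt0 pm) _.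
by apply: ereal_sup_ubound; exists (uniform_stake m) => //; exact: uniform_stake_seq.
Qed.

Lemma S_gamma_ge_csum c n w : stake_seq c -> p <= S_gamma beta c w ->
  - ((1 - p) * (1 - \sum_(i < n) c i)) <= csum p c n (trunc_coins beta n w).
Proof.
move=> c_stake /le_trans /(_ (lim_stake_sum_le c_stake (beta01^~ w) n)) S_le.
have -> : csum p c n (trunc_coins beta n w) =
    \sum_(i < n) c i * beta i w - p * \sum_(i < n) c i.
  rewrite /csum mulr_sumr -sumrB; apply: eq_bigr => i _.
  by rewrite /trunc_coins ltn_ord mulrBr [p * _]mulrC.
lra.
Qed.

Lemma P_S_gamma_ge_le c n : stake_seq c ->
  (P [set w | (p <= S_gamma beta c w)%R] <=
   (1 - Ebern p n (fun x =>
      (csum p c n x < - ((1 - p) * (1 - \sum_(i < n) c i)))%R%:R))%:E)%E.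
Proof.
move=> c_stake; set t := (1 - p) * _.
set A := trunc_coins beta n @^-1` [set x | - t <= csum p c n x].
apply: (@le_trans _ _ (P A)).
  apply: le_measure; rewrite ?inE.
  - exact: measurable_S_gamma_ge.
  - exact: measurable_trunc_coins_preimage.
  - by move=> w; apply: S_gamma_ge_csum.
rewrite /A (P_trunc_coins_preimage beta_bern beta_indep) lee_fin.
rewrite (eq_Ebern _ _ (g := fun x => 1 - (csum p c n x < - t)%R%:R)) ?Ebern1B // => x.
rewrite ltNge; case: (boolP (- t <= csum p c n x)) => h.
  by rewrite mem_set // subr0.
by rewrite memNset ?subrr //; apply/negP.
Qed.

Lemma P_S_gamma_le c : stake_seq c ->
  (P [set w | (p <= S_gamma beta c w)%R] <= (1 - (12 * kurt_bound p ^+ 2)^-1)%:E)%E.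
Proof.
move=> c_stake; have /andP[p_gt0 p_lt1] := p01.
set K := kurt_bound p; set v := bvar p.
have v_gt0 : 0 < v by rewrite mulr_gt0 // subr_gt0.
have K_ge3 : 3 <= K := kurt_bound_ge3 p01w.
have K_gt0 : 0 < K by apply: lt_le_trans K_ge3.
have c0_gt0 := stake_head_gt0 c_stake.
set e := c 0 * Num.sqrt v / (16 * K).
have e_gt0 : 0 < e by rewrite divr_gt0 ?mulr_gt0 ?sqrtr_gt0.
have [n [n_gt0 tail_lt]] := stake_tail_lt c_stake e_gt0.
apply: le_trans (P_S_gamma_ge_le n c_stake) _; rewrite lee_fin lerD2l lerN2.
set t := (1 - p) * (1 - \sum_(i < n) c i); set s := Num.sqrt (v * \sum_(i < n) c i ^+ 2).
have vS_ge0 : 0 <= v * \sum_(i < n) c i ^+ 2.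
  by apply: mulr_ge0; [exact: ltW | apply: sumr_ge0 => i _; exact: sqr_ge0].
have s_ge : c 0 * Num.sqrt v <= s.
  have sq_le : c 0 ^+ 2 <= \sum_(i < n) c i ^+ 2.
    case: n n_gt0 {tail_lt t s vS_ge0} => // n _.
    by rewrite big_ord_recl lerDl sumr_ge0 // => i _; rewrite sqr_ge0.
  rewrite -(ger0_norm (ltW c0_gt0)) -sqrtr_sqr -sqrtrM ?sqr_ge0 // mulrC.
  by rewrite ler_sqrt // ler_wpM2l // ltW.
have s_gt0 : 0 < s by apply: lt_le_trans s_ge; rewrite mulr_gt0 ?sqrtr_gt0.
have t_ge0 : 0 <= t by rewrite mulr_ge0 // subr_ge0 ?stake_partial_le1 // ltW.
have t_small : 16 * K * t <= s.
  have e_eq : 16 * K * e = c 0 * Num.sqrt v.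
    by rewrite /e mulrC mulfVK // gt_eqF // mulr_gt0.
  apply: le_trans s_ge; rewrite -e_eq; apply: ler_wpM2l; first by rewrite mulr_ge0 // ltW.
  apply: ltW; apply: le_lt_trans tail_lt.
  by rewrite /t ler_piMl ?subr_ge0 ?stake_partial_le1 // lerBlDr lerDl ltW.
have EY2 : Ebern p n (fun x => csum p c n x ^+ 2) = s ^+ 2.
  by rewrite Ebern_csum2 sqr_sqrtr.
have EY4 : Ebern p n (fun x => csum p c n x ^+ 4) <= K * s ^+ 4.
  by have := Ebern_csum4_le p01w c n; rewrite EY2 -exprM.
by have := Ebern_anticoncentration p01w K_ge3 s_gt0 t_ge0 t_small (Ebern_csum p c n) EY2 EY4.
Qed.

Lemma pi_fun_lt1 : (pi_fun P beta p < 1%:E)%E.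
Proof.
have /andP[p_gt0 p_lt1] := p01.
apply: (@le_lt_trans _ _ (1 - (12 * kurt_bound p ^+ 2)^-1)%:E).
  by apply: ge_ereal_sup => _ [c c_stake <-]; exact: P_S_gamma_le.
have K_gt0 : 0 < kurt_bound p by apply: lt_le_trans (kurt_bound_ge3 p01w).
by rewrite lte_fin gtrDl oppr_lt0 invr_gt0 mulr_gt0 // exprn_gt0.
Qed.

End StakeProbabilities.

Theorem proposition5 (d : measure_display) (T : measurableType d)
  (R : realType) (P : probability T R) (p : R) (beta : nat -> T -> R) :
  0 < p < 1 ->
  (forall i, bernoulli_rv P p (beta i)) ->
  mutually_independent P beta ->
  ((2^-1)%:E < pi_fun P beta p /\ pi_fun P beta p < 1%:E)%E.
Proof.
move=> p01 beta_bern beta_indep.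
by split; [exact: lt_half_pi_fun | exact: pi_fun_lt1].
Qed.
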